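(* Every algebra in the class $\mathcal A$ has a distributive congruence lattice (i.e. $\mathcal A$ is congruence distributive). The variety $\mathcal W$ is arithmetical (congruence permutable and congruence distributive) and congruence regular (for every $\mathbf B\in\mathcal W$, every element $a$ of $\mathbf B$ and all congruences $\Theta,\Phi$ of $\mathbf B$, $[a]\Theta=[a]\Phi$ implies $\Theta=\Phi$).
   Context: A bounded directoid with unary operation is an algebra $(P,\sqcup,{}',0,1)$ of type $(2,1,0,0)$ satisfying $x\sqcup x=x$, $x\sqcup y=y\sqcup x$, $x\sqcup((x\sqcup y)\sqcup z)=(x\sqcup y)\sqcup z$, $x\sqcup 0=x$, $x\sqcup 1=1$. Its induced order is $x\leq y$ iff $x\sqcup y=y$. Put $x\sqcap y:=(x'\sqcup y')'$. Conditions: (i) for all $x,y,z$: if $(x\sqcup z)\sqcup(((x'\sqcap w)\sqcap((x\sqcup y)\sqcap w))\sqcup z)=z$ for all $w\in P$, then $(x\sqcup y)\sqcup z=z$; (ii) $(x\sqcap y)\sqcup x\approx x$; (iii) $(x\sqcup y)\sqcup(x'\sqcup y)\approx 1$; (iv) $x''\approx x$; (i') $x\sqcup y\leq(x\sqcup z)\sqcup((x'\sqcap(x\sqcup y))\sqcup z)$ (as an identity, via the induced order). $\mathcal A$ is the class of bounded directoids with unary operation satisfying (i)–(iv) (equivalently, the directoids assigned to generalized orthomodular posets); $\mathcal W$ is the variety of bounded directoids with unary operation satisfying (ii), (iii), (iv) and (i'). *)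

Set Implicit Arguments.
(* Plain Rocq (no library needed). An algebra of type (2,1,0,0) is given by a
   carrier T with operations jn (⊔), cm (unary '), zero, one. *)

Section Defs.
Variables (T : Type) (jn : T -> T -> T) (cm : T -> T) (zero one : T).

Definition mt (x y : T) : T := cm (jn (cm x) (cm y)).
Definition dle (x y : T) : Prop := jn x y = y.

Definition bounded_directoid_unary : Prop :=
  (forall x, jn x x = x) /\
  (forall x y, jn x y = jn y x) /\
  (forall x y z, jn x (jn (jn x y) z) = jn (jn x y) z) /\
  (forall x, jn x zero = x) /\
  (forall x, jn x one = one).

Definition cond_i : Prop :=
  forall x y z,
    (forall w, jn (jn x z) (jn (mt (mt (cm x) w) (mt (jn x y) w)) z) = z) ->
    jn (jn x y) z = z.
Definition cond_ii : Prop := forall x y, jn (mt x y) x = x.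
Definition cond_iii : Prop := forall x y, jn (jn x y) (jn (cm x) y) = one.
Definition cond_iv : Prop := forall x, cm (cm x) = x.
Definition cond_i' : Prop :=
  forall x y z, dle (jn x y) (jn (jn x z) (jn (mt (cm x) (jn x y)) z)).

Definition in_class_A : Prop :=
  bounded_directoid_unary /\ cond_i /\ cond_ii /\ cond_iii /\ cond_iv.
Definition in_variety_W : Prop :=
  bounded_directoid_unary /\ cond_ii /\ cond_iii /\ cond_iv /\ cond_i'.

Definition congruence (R : T -> T -> Prop) : Prop :=
  (forall x, R x x) /\
  (forall x y, R x y -> R y x) /\
  (forall x y z, R x y -> R y z -> R x z) /\
  (forall x1 y1 x2 y2, R x1 y1 -> R x2 y2 -> R (jn x1 x2) (jn y1 y2)) /\
  (forall x y, R x y -> R (cm x) (cm y)).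

Definition rel_eq (R S : T -> T -> Prop) : Prop := forall x y, R x y <-> S x y.

Definition con_meet (R S : T -> T -> Prop) : T -> T -> Prop :=
  fun x y => R x y /\ S x y.
Definition con_join (R S : T -> T -> Prop) : T -> T -> Prop :=
  fun x y => forall C, congruence C ->
    (forall a b, R a b -> C a b) -> (forall a b, S a b -> C a b) -> C x y.

Definition con_distributive : Prop :=
  forall R S U, congruence R -> congruence S -> congruence U ->
    rel_eq (con_meet R (con_join S U)) (con_join (con_meet R S) (con_meet R U)).

Definition con_permutable : Prop :=
  forall R S, congruence R -> congruence S ->
    forall x y, (exists z, R x z /\ S z y) <-> (exists z, S x z /\ R z y).

Definition con_regular : Prop :=
  forall R S, congruence R -> congruence S ->
    forall a, (forall x, R a x <-> S a x) -> rel_eq R S.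

End Defs.


(* Both halves of the theorem come from term conditions of Mal'cev type.
   - Every algebra (T, ⊔, ', 0, 1) whose join is idempotent and commutative
     and which satisfies (ii) and (iv) has the majority term
     m(x,y,z) = (x ⊓ y) ⊔ (y ⊓ z) ⊔ (z ⊓ x); a majority term forces
     congruence distributivity.  This covers the class A and the variety W.
   - In W the orthomodular law v ≤ u ⊔ (u' ⊓ v) for u ≤ v (the case z = 0 of
     (i')) yields a Mal'cev term p (so W is congruence permutable) and a
     "difference" term d with d(x,x) = 0 and d(x,y) ≡ 0 ⇒ x ≡ y, so a
     congruence of W is determined by its 0-class; the 0-class in turn is
     determined by the class of any element a, which gives regularity. *)

Set Implicit Arguments.

Section Congruences.
Variables (T : Type) (jn : T -> T -> T) (cm : T -> T).
Local Notation cong := (congruence jn cm).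

Section Laws.
Variables (R : T -> T -> Prop) (HR : cong R).

Lemma cong_refl x : R x x.
Proof. destruct HR as [refl _]. apply refl. Qed.

Lemma cong_sym {x y} : R x y -> R y x.
Proof. destruct HR as [_ [sym _]]. apply sym. Qed.

Lemma cong_trans y x z : R x y -> R y z -> R x z.
Proof. destruct HR as [_ [_ [trans _]]]. apply trans. Qed.

Lemma cong_jn {x1 y1 x2 y2} : R x1 y1 -> R x2 y2 -> R (jn x1 x2) (jn y1 y2).
Proof. destruct HR as [_ [_ [_ [comp _]]]]. apply comp. Qed.

Lemma cong_cm {x y} : R x y -> R (cm x) (cm y).
Proof. destruct HR as [_ [_ [_ [_ comp]]]]. apply comp. Qed.

Lemma cong_mt {x1 y1 x2 y2} : R x1 y1 -> R x2 y2 -> R (mt jn cm x1 x2) (mt jn cm y1 y2).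
Proof. intros h1 h2. unfold mt. apply cong_cm, cong_jn; apply cong_cm; assumption. Qed.

End Laws.

Lemma meet_congruence R S : cong R -> cong S -> cong (con_meet R S).
Proof.
  intros HR HS. unfold con_meet. repeat split.
  all: repeat match goal with H : _ /\ _ |- _ => destruct H end.
  - apply (cong_refl HR).
  - apply (cong_refl HS).
  - apply (cong_sym HR); assumption.
  - apply (cong_sym HS); assumption.
  - apply (cong_trans HR y); assumption.
  - apply (cong_trans HS y); assumption.
  - apply (cong_jn HR); assumption.
  - apply (cong_jn HS); assumption.
  - apply (cong_cm HR); assumption.
  - apply (cong_cm HS); assumption.
Qed.

Lemma join_congruence S U : cong (con_join jn cm S U).
Proof.
  unfold con_join. repeat split.
  - intros x C HC _ _. apply (cong_refl HC).
  - intros x y h C HC hS hU. apply (cong_sym HC), h; assumption.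
  - intros x y z h1 h2 C HC hS hU. apply (cong_trans HC y); [apply h1 | apply h2]; assumption.
  - intros x1 y1 x2 y2 h1 h2 C HC hS hU. apply (cong_jn HC); [apply h1 | apply h2]; assumption.
  - intros x y h C HC hS hU. apply (cong_cm HC), h; assumption.
Qed.

Lemma join_incl_l (S U : T -> T -> Prop) x y : S x y -> con_join jn cm S U x y.
Proof. intros h C _ hS _. apply hS, h. Qed.

Lemma join_incl_r (S U : T -> T -> Prop) x y : U x y -> con_join jn cm S U x y.
Proof. intros h C _ _ hU. apply hU, h. Qed.

Inductive chain (S U : T -> T -> Prop) : T -> T -> Prop :=
| chain_l x y : S x y -> chain S U x y
| chain_r x y : U x y -> chain S U x y
| chain_trans x y z : chain S U x y -> chain S U y z -> chain S U x z.

(* Chains between two congruences form a congruence: symmetric because the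
   steps are, compatible because the operations can be applied step by step. *)
Lemma chain_congruence S U : cong S -> cong U -> cong (chain S U).
Proof.
  intros HS HU.
  assert (stepwise : forall f : T -> T,
            (forall x y, S x y -> S (f x) (f y)) -> (forall x y, U x y -> U (f x) (f y)) ->
            forall x y, chain S U x y -> chain S U (f x) (f y)).
  { intros f fS fU x y h. induction h.
    - apply chain_l, fS; assumption.
    - apply chain_r, fU; assumption.
    - eapply chain_trans; eassumption. }
  repeat split.
  - intro x. apply chain_l, (cong_refl HS).
  - intros x y h. induction h.
    + apply chain_l, (cong_sym HS); assumption.
    + apply chain_r, (cong_sym HU); assumption.
    + eapply chain_trans; eassumption.
  - intros x y z. apply chain_trans.
  - intros x1 y1 x2 y2 h1 h2. apply chain_trans with (jn y1 x2).
    + apply (stepwise (fun t => jn t x2)); [| | exact h1]; intros a b h.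
      * apply (cong_jn HS); [exact h | apply (cong_refl HS)].
      * apply (cong_jn HU); [exact h | apply (cong_refl HU)].
    + apply (stepwise (jn y1)); [| | exact h2]; intros a b h.
      * apply (cong_jn HS); [apply (cong_refl HS) | exact h].
      * apply (cong_jn HU); [apply (cong_refl HU) | exact h].
  - apply stepwise; intros; [apply (cong_cm HS) | apply (cong_cm HU)]; assumption.
Qed.

Lemma join_chain S U x y :
  cong S -> cong U -> con_join jn cm S U x y -> chain S U x y.
Proof.
  intros HS HU h. apply h.
  - apply chain_congruence; assumption.
  - apply chain_l.
  - apply chain_r.
Qed.

Definition compatible (m : T -> T -> T -> T) : Prop :=
  forall R, cong R -> forall a b c a' b' c',
    R a a' -> R b b' -> R c c' -> R (m a b c) (m a' b' c').

(* If x R y and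
   x, y are joined by an (S,U)-chain, applying m x _ y along the chain gives an
   (R/\S, R/\U)-chain from m x x y = x to m x y y = y. *)
Lemma distributive_of_majority (m : T -> T -> T -> T) :
  compatible m ->
  (forall x y, m x x y = x) -> (forall x y, m x y x = x) -> (forall x y, m y x x = x) ->
  con_distributive jn cm.
Proof.
  intros Hm mxxy mxyx myxx R S U HR HS HU x y. split.
  - intros [Rxy Jxy].
    assert (near_x : forall a, R (m x a y) x).
    { intro a. assert (h : R (m x a y) (m x a x)).
      { apply Hm; [assumption | apply (cong_refl HR) | apply (cong_refl HR)
                   | apply (cong_sym HR); assumption]. }
      rewrite mxyx in h. exact h. }
    assert (along : forall a b, chain S U a b ->
              con_join jn cm (con_meet R S) (con_meet R U) (m x a y) (m x b y)).
    { intros a b h. induction h.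
      - apply join_incl_l. split.
        + apply (cong_trans HR x); [| apply (cong_sym HR)]; apply near_x.
        + apply Hm; [assumption | apply (cong_refl HS) | assumption | apply (cong_refl HS)].
      - apply join_incl_r. split.
        + apply (cong_trans HR x); [| apply (cong_sym HR)]; apply near_x.
        + apply Hm; [assumption | apply (cong_refl HU) | assumption | apply (cong_refl HU)].
      - apply (cong_trans (join_congruence _ _) (m x y0 y)); assumption. }
    assert (ends := along x y (join_chain HS HU Jxy)).
    rewrite mxxy, myxx in ends. exact ends.
  - intro h. apply h.
    + apply meet_congruence; [assumption | apply join_congruence].
    + intros a b [hR hS]. split; [assumption | apply join_incl_l, hS].
    + intros a b [hR hU]. split; [assumption | apply join_incl_r, hU].
Qed.

(* An algebra with a Mal'cev term is congruence permutable: if x R z S y then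
   x S p x z y R y. *)
Lemma permutable_of_malcev (p : T -> T -> T -> T) :
  compatible p -> (forall x z, p x x z = z) -> (forall x z, p x z z = x) ->
  con_permutable jn cm.
Proof.
  intros Hp pxxz pxzz.
  assert (half : forall R S, cong R -> cong S -> forall x y,
             (exists z, R x z /\ S z y) -> exists z, S x z /\ R z y).
  { intros R S HR HS x y [z [Rxz Szy]]. exists (p x z y). split.
    - assert (h : S (p x z z) (p x z y)).
      { apply Hp; [assumption | apply (cong_refl HS) | apply (cong_refl HS) | assumption]. }
      rewrite pxzz in h. exact h.
    - assert (h : R (p x z y) (p z z y)).
      { apply Hp; [assumption | assumption | apply (cong_refl HR) | apply (cong_refl HR)]. }
      rewrite pxxz in h. exact h. }
  intros R S HR HS x y. split; apply half; assumption.
Qed.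

End Congruences.

Ltac compat HR :=
  repeat first [ apply (cong_mt HR) | apply (cong_jn HR) | apply (cong_cm HR) | assumption ].

Section MajorityTerm.
Variables (T : Type) (jn : T -> T -> T) (cm : T -> T).
Local Notation "x ⊔ y" := (jn x y) (at level 50, left associativity).
Local Notation "x ⊓ y" := (mt jn cm x y) (at level 40, left associativity).
Hypotheses (jn_idem : forall x, x ⊔ x = x) (jn_comm : forall x y, x ⊔ y = y ⊔ x)
           (absorb : cond_ii jn cm) (cm_invol : cond_iv cm).

Lemma mt_comm x y : x ⊓ y = y ⊓ x.
Proof. unfold mt. rewrite jn_comm. reflexivity. Qed.

Lemma mt_idem x : x ⊓ x = x.
Proof. unfold mt. rewrite jn_idem. apply cm_invol. Qed.

Lemma jn_mt_absorb x y : x ⊔ x ⊓ y = x.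
Proof. rewrite jn_comm. apply absorb. Qed.

Definition majority x y z := x ⊓ y ⊔ y ⊓ z ⊔ z ⊓ x.

Lemma majority_compatible : compatible jn cm majority.
Proof. intros R HR a b c a' b' c' ha hb hc. unfold majority. compat HR. Qed.

Lemma majority_xxy x y : majority x x y = x.
Proof. unfold majority. rewrite mt_idem, jn_mt_absorb, (mt_comm y x), jn_mt_absorb. reflexivity. Qed.

Lemma majority_xyx x y : majority x y x = x.
Proof. unfold majority. rewrite (mt_comm y x), jn_idem, mt_idem. apply absorb. Qed.

Lemma majority_yxx x y : majority y x x = x.
Proof.
  unfold majority. rewrite mt_idem, (mt_comm y x), absorb.
  apply jn_mt_absorb.
Qed.

Lemma distributive_of_absorption : con_distributive jn cm.
Proof.
  apply (distributive_of_majority majority_compatible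
           majority_xxy majority_xyx majority_yxx).
Qed.

End MajorityTerm.

Section VarietyW.
Variables (T : Type) (jn : T -> T -> T) (cm : T -> T) (zero one : T).
Local Notation "x ⊔ y" := (jn x y) (at level 50, left associativity).
Local Notation "x ⊓ y" := (mt jn cm x y) (at level 40, left associativity).
Local Notation "x ≤ y" := (jn x y = y) (at level 70).
Local Notation cong := (congruence jn cm).
Hypothesis HW : in_variety_W jn cm zero one.

Lemma jn_idem x : x ⊔ x = x.
Proof. destruct HW as [[H _] _]. apply H. Qed.

Lemma jn_comm x y : x ⊔ y = y ⊔ x.
Proof. destruct HW as [[_ [H _]] _]. apply H. Qed.

Lemma jn_absorb_jn x y z : x ⊔ (x ⊔ y ⊔ z) = x ⊔ y ⊔ z.
Proof. destruct HW as [[_ [_ [H _]]] _]. apply H. Qed.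

Lemma jn_zero x : x ⊔ zero = x.
Proof. destruct HW as [[_ [_ [_ [H _]]]] _]. apply H. Qed.

Lemma jn_one x : x ≤ one.
Proof. destruct HW as [[_ [_ [_ [_ H]]]] _]. apply H. Qed.

Lemma mt_jn_absorb : cond_ii jn cm.
Proof. destruct HW as [_ [H _]]. apply H. Qed.

Lemma jn_jn_cm x y : x ⊔ y ⊔ (cm x ⊔ y) = one.
Proof. destruct HW as [_ [_ [H _]]]. apply H. Qed.

Lemma cm_invol : cond_iv cm.
Proof. destruct HW as [_ [_ [_ [H _]]]]. apply H. Qed.

Lemma law_i' x y z : x ⊔ y ≤ x ⊔ z ⊔ (cm x ⊓ (x ⊔ y) ⊔ z).
Proof. destruct HW as [_ [_ [_ [_ H]]]]. apply H. Qed.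

Lemma mt_commW x y : x ⊓ y = y ⊓ x.
Proof. apply mt_comm, jn_comm. Qed.

Lemma mt_idemW x : x ⊓ x = x.
Proof. apply mt_idem; [apply jn_idem | apply cm_invol]. Qed.

Lemma le_trans x y z : x ≤ y -> y ≤ z -> x ≤ z.
Proof. intros h1 h2. rewrite <- h2, <- h1. apply jn_absorb_jn. Qed.

Lemma le_jn_l x y : x ≤ x ⊔ y.
Proof. assert (h := jn_absorb_jn x y (x ⊔ y)). rewrite jn_idem in h. exact h. Qed.

Lemma le_jn_r x y : y ≤ x ⊔ y.
Proof. rewrite (jn_comm x y). apply le_jn_l. Qed.

Lemma zero_le x : zero ≤ x.
Proof. rewrite jn_comm. apply jn_zero. Qed.

Lemma cm_antitone x y : x ≤ y -> cm y ≤ cm x.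
Proof.
  intro h. assert (a := mt_jn_absorb (cm x) (cm y)).
  unfold mt in a. rewrite !cm_invol, h in a. exact a.
Qed.

Lemma mt_of_le x y : x ≤ y -> x ⊓ y = x.
Proof.
  intro h. unfold mt. rewrite jn_comm, (cm_antitone h). apply cm_invol.
Qed.

Lemma cm_one : cm one = zero.
Proof.
  assert (h := cm_antitone (jn_one (cm zero))).
  rewrite cm_invol in h. rewrite <- h. symmetry. apply jn_zero.
Qed.

Lemma cm_zero : cm zero = one.
Proof. rewrite <- cm_one. apply cm_invol. Qed.

Lemma jn_cm x : x ⊔ cm x = one.
Proof. assert (h := jn_jn_cm x zero). rewrite !jn_zero in h. exact h. Qed.

Lemma mt_cm x : x ⊓ cm x = zero.
Proof. unfold mt. rewrite cm_invol, jn_comm, jn_cm. apply cm_one. Qed.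

Lemma orth x y : x ≤ y -> x ⊓ cm y = zero.
Proof.
  intro h. unfold mt. rewrite cm_invol.
  assert (h' := jn_jn_cm x y). rewrite h, le_jn_r in h'.
  rewrite h'. apply cm_one.
Qed.

Lemma orthomodular u v : u ≤ v -> v ≤ u ⊔ cm u ⊓ v.
Proof. intro h. assert (h' := law_i' u v zero). rewrite h, !jn_zero in h'. exact h'. Qed.

Lemma orthomodular_eq u v : u ≤ v -> v ⊓ (u ⊔ v ⊓ cm u) = v.
Proof. intro h. apply mt_of_le. rewrite (mt_commW v). apply orthomodular, h. Qed.

Lemma orthomodular_dual a b : a ≤ b -> a ⊔ b ⊓ (a ⊔ cm b) = a.
Proof.
  intro h. assert (h' := cm_antitone (orthomodular (cm_antitone h))).
  rewrite !cm_invol in h'. rewrite jn_comm.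
  replace (b ⊓ (a ⊔ cm b)) with (cm (cm b ⊔ b ⊓ cm a)); [exact h' |].
  unfold mt. rewrite !cm_invol, (jn_comm a (cm b)). reflexivity.
Qed.

Definition malcev x y z := (x ⊔ (x ⊔ z) ⊓ (x ⊔ cm x ⊓ cm y)) ⊓ (z ⊔ cm y ⊓ (x ⊔ y)).

Lemma malcev_compatible : compatible jn cm malcev.
Proof. intros R HR a b c a' b' c' ha hb hc. unfold malcev. compat HR. Qed.

Lemma malcev_xxz x z : malcev x x z = z.
Proof.
  unfold malcev. rewrite mt_idemW, jn_cm, (mt_of_le (jn_one _)), le_jn_l, jn_idem.
  rewrite (mt_commW (cm x)), mt_cm, jn_zero, mt_commW. apply mt_of_le, le_jn_r.
Qed.

Lemma malcev_xzz x z : malcev x z z = x.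
Proof.
  unfold malcev.
  replace (cm x ⊓ cm z) with (cm (x ⊔ z)) by (unfold mt; rewrite !cm_invol; reflexivity).
  rewrite (orthomodular_dual (le_jn_l x z)). apply mt_of_le.
  apply le_trans with (x ⊔ z); [apply le_jn_l | apply orthomodular, le_jn_r].
Qed.

Definition diff x y := (x ⊔ y) ⊓ cm x ⊔ (x ⊔ y) ⊓ cm y.

Lemma diff_compatible R x y x' y' : cong R -> R x x' -> R y y' -> R (diff x y) (diff x' y').
Proof. intros HR hx hy. unfold diff. compat HR. Qed.

Lemma diff_xx x : diff x x = zero.
Proof. unfold diff. rewrite !jn_idem. apply mt_cm. Qed.

Lemma cong_of_relative_cm R x s :
  cong R -> x ≤ s -> R (s ⊓ cm x) zero -> R s x.
Proof.
  intros HR hxs h.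
  assert (h' : R (s ⊓ (x ⊔ s ⊓ cm x)) (s ⊓ (x ⊔ zero))).
  { apply (cong_mt HR), (cong_jn HR); [apply (cong_refl HR) | apply (cong_refl HR) | exact h]. }
  rewrite (orthomodular_eq hxs), jn_zero, mt_commW, (mt_of_le hxs) in h'. exact h'.
Qed.

Lemma cong_of_diff_zero R x y : cong R -> R (diff x y) zero -> R x y.
Proof.
  intros HR h. unfold diff in h.
  assert (below : forall a b, a ≤ b -> R b zero -> R a zero).
  { intros a b hab hb. assert (h' : R (a ⊓ b) (a ⊓ zero)).
    { apply (cong_mt HR); [apply (cong_refl HR) | exact hb]. }
    rewrite (mt_of_le hab), mt_commW, (mt_of_le (zero_le a)) in h'. exact h'. }
  assert (hx : R (x ⊔ y) x).
  { apply cong_of_relative_cm; [exact HR | apply le_jn_l |]. eapply below; [apply le_jn_l | exact h]. }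
  assert (hy : R (x ⊔ y) y).
  { apply cong_of_relative_cm; [exact HR | apply le_jn_r |]. eapply below; [apply le_jn_r | exact h]. }
  apply (cong_trans HR (x ⊔ y)); [apply (cong_sym HR) |]; assumption.
Qed.

Lemma mt_le_r x y : x ⊓ y ≤ y.
Proof. rewrite mt_commW. apply mt_jn_absorb. Qed.

Lemma cong_mt_below S a u v : cong S -> S a v -> u ≤ v -> S (u ⊓ a) u.
Proof.
  intros HS h huv. assert (h' : S (u ⊓ a) (u ⊓ v)).
  { apply (cong_mt HS); [apply (cong_refl HS) | exact h]. }
  rewrite (mt_of_le huv) in h'. exact h'.
Qed.

(* If the R-class of a lies in the S-class of a, then so does the R-class of 0:
   for u ≡ 0 (mod R), a is R-related to a ⊔ u and to a ⊓ u', hence S-related;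
   so u is S-related to both u ⊓ a and u ⊓ a', whose meet is 0. *)
Lemma zero_class_of_class R S a :
  cong R -> cong S -> (forall x, R a x -> S a x) -> forall u, R u zero -> S u zero.
Proof.
  intros HR HS Hclass u hu.
  assert (h1 : S a (a ⊔ u)).
  { apply Hclass. assert (h : R (a ⊔ zero) (a ⊔ u)).
    { apply (cong_jn HR); [apply (cong_refl HR) | apply (cong_sym HR), hu]. }
    rewrite jn_zero in h. exact h. }
  assert (h2 : S a (a ⊓ cm u)).
  { apply Hclass. assert (h : R (a ⊓ cm zero) (a ⊓ cm u)).
    { apply (cong_mt HR); [apply (cong_refl HR) | apply (cong_cm HR), (cong_sym HR), hu]. }
    rewrite cm_zero, (mt_of_le (jn_one a)) in h. exact h. }
  assert (hb : S (u ⊓ a) u) by (eapply cong_mt_below; [exact HS | exact h1 | apply le_jn_r]).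
  assert (hc : S (u ⊓ cm a) u).
  { eapply cong_mt_below; [exact HS | exact (cong_cm HS h2) |].
    replace (cm (a ⊓ cm u)) with (cm a ⊔ u) by (unfold mt; rewrite !cm_invol; reflexivity).
    apply le_jn_r. }
  assert (disjoint : u ⊓ a ⊓ (u ⊓ cm a) = zero).
  { assert (h : a ≤ cm (u ⊓ cm a)).
    { assert (h' := cm_antitone (mt_le_r u (cm a))). rewrite cm_invol in h'. exact h'. }
    rewrite <- (cm_invol (u ⊓ cm a)). apply orth, (le_trans (mt_le_r u a) h). }
  assert (hbc : S (u ⊓ a ⊓ (u ⊓ a)) (u ⊓ a ⊓ (u ⊓ cm a))).
  { apply (cong_mt HS); [apply (cong_refl HS) |].
    apply (cong_trans HS u); [exact hb | apply (cong_sym HS), hc]. }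
  rewrite mt_idemW, disjoint in hbc.
  apply (cong_trans HS (u ⊓ a)); [apply (cong_sym HS) |]; assumption.
Qed.

Lemma incl_of_zero_class R S :
  cong R -> cong S -> (forall u, R u zero -> S u zero) -> forall x y, R x y -> S x y.
Proof.
  intros HR HS Hzero x y hxy. apply cong_of_diff_zero; [exact HS |]. apply Hzero.
  rewrite <- (diff_xx x). apply diff_compatible; [exact HR | apply (cong_refl HR) |].
  apply (cong_sym HR), hxy.
Qed.

Lemma W_permutable : con_permutable jn cm.
Proof. exact (permutable_of_malcev malcev_compatible malcev_xxz malcev_xzz). Qed.

Lemma W_distributive : con_distributive jn cm.
Proof. exact (distributive_of_absorption jn_idem jn_comm mt_jn_absorb cm_invol). Qed.

Lemma W_regular : con_regular jn cm.
Proof.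
  intros R S HR HS a Hclass x y. split; apply incl_of_zero_class; try assumption;
    eapply zero_class_of_class; try eassumption; intro z; apply Hclass.
Qed.

End VarietyW.

Theorem mainTheorem7 :
  (forall (T : Type) (jn : T -> T -> T) (cm : T -> T) (zero one : T),
      in_class_A jn cm zero one -> con_distributive jn cm) /\
  (forall (T : Type) (jn : T -> T -> T) (cm : T -> T) (zero one : T),
      in_variety_W jn cm zero one ->
      con_permutable jn cm /\ con_distributive jn cm /\ con_regular jn cm).
Proof.
  split.
  - intros T jn cm zero one [[idem [comm _]] [_ [absorb [_ invol]]]].
    exact (distributive_of_absorption idem comm absorb invol).
  - intros T jn cm zero one HW.
    exact (conj (W_permutable HW) (conj (W_distributive HW) (W_regular HW))).
Qed.
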